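(* For every $L\ge1$, the Lie algebra $\mathfrak{OA}_{1,L}=\mathfrak{OA}/\mathfrak I_{(t-1)^L}$ is solvable of dimension $L+\lfloor L/2\rfloor$, and the images of $X_k$ ($0\le k<L$) together with the images of $Y_j$ ($0\le j<L$, $j$ odd) form a basis of it.
   Context: Work over $\mathbb C$. $\mathfrak{sl}_2$ has basis $e,f,h$ with $[e,f]=h$, $[h,e]=2e$, $[h,f]=-2f$. The Onsager algebra is the Lie subalgebra $\mathfrak{OA}=\{p(t)e+p(t^{-1})f+q(t)h:\ p,q\in\mathbb C[t,t^{-1}],\ q(t^{-1})=-q(t)\}$ of the loop algebra $\mathbb C[t,t^{-1}]\otimes\mathfrak{sl}_2$ (bracket $[px,qy]=pq[x,y]$). $\mathfrak I_{(t-1)^L}=\{p(t)e+p(t^{-1})f+q(t)h\in\mathfrak{OA}: p,q\in(t-1)^L\mathbb C[t,t^{-1}]\}$. For $k\ge0$, $X_k=2(t-1)^ke+2(t^{-1}-1)^kf$ and $Y_k=(-1)^k\big((t-1)^k-(t^{-1}-1)^k\big)h$, elements of $\mathfrak{OA}$. $\lfloor r\rfloor$ is the integer part. *)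

From HB Require Import structures.
From mathcomp Require Import all_boot all_algebra.
From mathcomp Require Import complex Rstruct.
Set Implicit Arguments. Unset Strict Implicit. Unset Printing Implicit Defensive.
Import GRing.Theory.
Local Open Scope ring_scope.

Definition C : fieldType := (Rdefinitions.R)[i].

(* Rational functions C(t); Laurent polynomials C[t,t^-1] are the subring below. *)
Definition LF : fieldType := {fraction {poly C}}.
Definition tofr (p : {poly C}) : LF := @FracField.tofrac _ p.
Definition cst (c : C) : LF := tofr c%:P.
Definition tvar : LF := tofr 'X.

Definition laurent (f : LF) : Prop :=
  exists (n : nat) (p : {poly C}), f = tofr p / tvar ^+ n.

(* The automorphism of C(t) induced by t |-> t^-1 (restricts to p(t) |-> p(t^-1)
   on Laurent polynomials). *)
Definition sigma0 (p : {poly C}) : LF := (map_poly cst p).[tvar^-1].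
Definition sigma (f : LF) : LF :=
  sigma0 \n_(repr f) / sigma0 \d_(repr f).

(* sl2 basis, loop algebra realized inside 2x2 matrices over C(t). *)
Definition E_ : 'M[LF]_2 := \matrix_(i < 2, j < 2) ((i == 0) && (j == 1))%:R.
Definition F_ : 'M[LF]_2 := \matrix_(i < 2, j < 2) ((i == 1) && (j == 0))%:R.
Definition H_ : 'M[LF]_2 :=
  \matrix_(i < 2, j < 2) (if i == j then (if i == 0 then 1 else -1) else 0).

Definition mk (a b c : LF) : 'M[LF]_2 := a *: E_ + b *: F_ + c *: H_.

Definition lbr (x y : 'M[LF]_2) : 'M[LF]_2 := x *m y - y *m x.

Definition cscale (c : C) (x : 'M[LF]_2) : 'M[LF]_2 := cst c *: x.

Definition OA (x : 'M[LF]_2) : Prop :=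
  exists p q : LF, [/\ laurent p, laurent q, sigma q = - q & x = mk p (sigma p) q].

Definition inI (L : nat) (x : 'M[LF]_2) : Prop :=
  exists p q : LF, [/\ laurent p, laurent q, sigma q = - q & x = mk p (sigma p) q] /\
    (exists r, laurent r /\ p = (tvar - 1) ^+ L * r) /\
    (exists r, laurent r /\ q = (tvar - 1) ^+ L * r).

Definition Xk (k : nat) : 'M[LF]_2 :=
  mk (2%:R * (tvar - 1) ^+ k) (2%:R * (tvar^-1 - 1) ^+ k) 0.
Definition Yk (k : nat) : 'M[LF]_2 :=
  mk 0 0 ((-1) ^+ k * ((tvar - 1) ^+ k - (tvar^-1 - 1) ^+ k)).

Inductive derived : nat -> 'M[LF]_2 -> Prop :=
| derived0 x : OA x -> derived 0 x
| derived_br n x y : derived n x -> derived n y -> derived n.+1 (lbr x y)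
| derived_zero n : derived n.+1 0
| derived_add n x y : derived n.+1 x -> derived n.+1 y -> derived n.+1 (x + y)
| derived_scale n c x : derived n.+1 x -> derived n.+1 (cscale c x).

(* OA/I_{(t-1)^L} is solvable: its derived series, which is the image of
   the derived series of OA, reaches 0, i.e. some D n is contained in I. *)
Definition quot_solvable (L : nat) : Prop :=
  exists n, forall x, derived n x -> inI L x.

Definition lcomb (a : nat -> C) (s : seq 'M[LF]_2) : 'M[LF]_2 :=
  \sum_(i < size s) cscale (a i) s`_i.

Definition quot_basis (L : nat) (s : seq 'M[LF]_2) : Prop :=
  [/\ forall x, x \in s -> OA x,
      (forall a : nat -> C, inI L (lcomb a s) -> forall i, (i < size s)%N -> a i = 0) &
      (forall x, OA x -> exists a : nat -> C, inI L (x - lcomb a s))].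

Definition quot_dim (L d : nat) : Prop :=
  exists s, size s = d /\ quot_basis L s.

Definition basis_family (L : nat) : seq 'M[LF]_2 :=
  [seq Xk k | k <- iota 0 L] ++ [seq Yk j | j <- iota 0 L & odd j].

(* Write an element of OA as mk p (sigma p) q with sigma q = - q and put u = t - 1, so that
   I_{(t-1)^n} consists of those elements with u^n dividing p and q in C[t,t^-1].  Since
   sigma u = - u t^-1, an antisymmetric q divisible by u^m with m even is divisible by u^(m+1):
   writing q = u^m r, antisymmetry gives t^-m sigma r = - r, whose value at t = 1 is
   r(1) = - r(1).  By the bracket formula the n-th derived algebra therefore lies in
   I_{(t-1)^n} (the parity fact handles n = 1), so OA/I_{(t-1)^L} is solvable.  Modulo u^L,
   p is a unique combination of the u^i (i < L), i.e. of the X_i, and by the parity fact q is a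
   unique combination of the Y_j with j < L odd, because Y_j = -2 u^j mod u^(j+1). *)

From HB Require Import structures.
From mathcomp Require Import all_boot all_algebra.
From mathcomp Require Import complex Rstruct ring zify.
Set Implicit Arguments. Unset Strict Implicit. Unset Printing Implicit Defensive.
Import GRing.Theory.
Local Open Scope ring_scope.

HB.instance Definition _ := GRing.RMorphism.copy tofr (@FracField.tofrac {poly C}).
HB.instance Definition _ := GRing.RMorphism.copy cst (tofr \o polyC).

Lemma two_neq0 : 2%:R != 0 :> C.
Proof. by rewrite /C Num.Theory.pnatr_eq0. Qed.

Lemma tofr_inj : injective tofr.
Proof. by move=> p q /eqP; rewrite tofrac_eq => /eqP. Qed.

Lemma tofr_eq0 p : (tofr p == 0) = (p == 0).
Proof. exact: tofrac_eq0. Qed.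

Lemma tvar_neq0 : tvar != 0.
Proof. by rewrite tofr_eq0 polyX_eq0. Qed.

Lemma tofr_numden (f : LF) : f = tofr \n_(repr f) / tofr \d_(repr f).
Proof.
rewrite /tofr; unlock FracField.tofrac; rewrite -[f in LHS]reprK.
set r := repr f.
have := FracField.pi_mul (Ratio \n_r 1) (Ratio 1 \d_r).
rewrite /FracField.mulf !numden_Ratio ?oner_neq0 ?denom_ratioP //.
rewrite mulr1 mul1r Ratio_numden => ->.
have := FracField.pi_inv (Ratio \d_r 1).
by rewrite /FracField.invf !numden_Ratio ?oner_neq0 // => ->.
Qed.

Lemma fracP (f : LF) : exists n d, d != 0 /\ f = tofr n / tofr d.
Proof. by exists \n_(repr f), \d_(repr f); split; [exact: denom_ratioP | exact: tofr_numden]. Qed.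

Lemma tvarV_comm : commr_rmorph cst tvar^-1.
Proof. by move=> a; rewrite /GRing.comm mulrC. Qed.

HB.instance Definition _ := GRing.RMorphism.copy sigma0 (horner_morph tvarV_comm).

Lemma sigma0_rev p :
  sigma0 p * tvar ^+ (size p).-1 = tofr (\poly_(i < size p) p`_((size p).-1 - i)).
Proof.
rewrite /sigma0 (horner_coef_wide _ (eq_leq (size_map_poly cst p))).
rewrite poly_def rmorph_sum mulr_suml /=.
case Ep: (size p) => [|m]; first by rewrite !big_ord0.
rewrite (reindex_inj rev_ord_inj); apply: eq_bigr => i _ /=.
rewrite coef_map subSS -mul_polyC rmorphM rmorphXn -mulrA; congr (_ * _).
have -> : tvar ^+ m = tvar ^+ (m - i) * tvar ^+ i by rewrite -exprD subnK // -ltnS.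
by rewrite exprVn mulKf // expf_neq0 // tvar_neq0.
Qed.

Lemma sigma0_neq0 p : p != 0 -> sigma0 p != 0.
Proof.
move=> p0; apply/negP => /eqP /(congr1 (fun f => f * tvar ^+ (size p).-1)).
rewrite sigma0_rev mul0r => /eqP; rewrite tofr_eq0 => /eqP /polyP /(_ 0%N).
rewrite coef_poly coef0 size_poly_gt0 p0 subn0 -lead_coefE => /eqP.
by rewrite lead_coef_eq0 (negPf p0).
Qed.

Lemma sigma_frac n d : d != 0 -> sigma (tofr n / tofr d) = sigma0 n / sigma0 d.
Proof.
move=> d0; rewrite /sigma; set r := repr _.
have r0 : \d_r != 0 by apply: denom_ratioP.
have : n * \d_r = \n_r * d.
  apply: tofr_inj; rewrite !rmorphM /=; apply/eqP.
  by rewrite -eqr_div ?tofr_eq0 // -tofr_numden.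
move=> /(congr1 sigma0); rewrite !rmorphM /= => e.
by apply/eqP; rewrite eqr_div ?sigma0_neq0 // e.
Qed.

Lemma sigma_is_zmod_morphism : zmod_morphism sigma.
Proof.
move=> f g; have [n [d [d0 ->]]] := fracP f; have [n' [d' [d'0 ->]]] := fracP g.
rewrite -mulNr -rmorphN addf_div ?tofr_eq0 // -!rmorphM -rmorphD /=.
rewrite !sigma_frac ?mulf_neq0 // rmorphD !rmorphM rmorphN /=.
by rewrite -addf_div ?sigma0_neq0 // mulNr.
Qed.

Lemma sigma_is_monoid_morphism : monoid_morphism sigma.
Proof.
split.
  by rewrite -[1](divr1 (tofr 1)) rmorph1 sigma_frac ?oner_neq0 // !rmorph1 divr1.
move=> f g; have [n [d [d0 ->]]] := fracP f; have [n' [d' [d'0 ->]]] := fracP g.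
by rewrite mulf_div -!rmorphM /= !sigma_frac ?mulf_neq0 // mulf_div !rmorphM.
Qed.

HB.instance Definition _ := GRing.isZmodMorphism.Build LF LF sigma sigma_is_zmod_morphism.
HB.instance Definition _ := GRing.isMonoidMorphism.Build LF LF sigma sigma_is_monoid_morphism.

Lemma sigma_tofr p : sigma (tofr p) = sigma0 p.
Proof. by rewrite -[tofr p]divr1 -(rmorph1 tofr) sigma_frac ?oner_neq0 // rmorph1 divr1. Qed.

Lemma sigma_cst c : sigma (cst c) = cst c.
Proof. by rewrite sigma_tofr /sigma0 map_polyC hornerC. Qed.

Lemma sigma_tvar : sigma tvar = tvar^-1.
Proof. by rewrite sigma_tofr /sigma0 map_polyX hornerX. Qed.

Lemma sigma_tvarV : sigma tvar^-1 = tvar.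
Proof. by rewrite fmorphV /= sigma_tvar invrK. Qed.

Lemma sigmaK : involutive sigma.
Proof.
have sigma_sigma0 p : sigma (sigma0 p) = tofr p.
  rewrite /sigma0 -horner_map /= sigma_tvarV -map_poly_comp.
  by rewrite (eq_map_poly sigma_cst) (poly_initial tofr p).
move=> f; have [n [d [d0 ->]]] := fracP f.
by rewrite sigma_frac // fmorph_div /= !sigma_sigma0.
Qed.

Lemma laurent_tofr p : laurent (tofr p).
Proof. by exists 0%N, p; rewrite expr0 divr1. Qed.

Lemma laurent_cst c : laurent (cst c).
Proof. exact: laurent_tofr. Qed.

Lemma laurent_nat n : laurent n%:R.
Proof. by rewrite -(rmorph_nat tofr); apply: laurent_tofr. Qed.

Lemma laurentD f g : laurent f -> laurent g -> laurent (f + g).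
Proof.
move=> [n [P ->]] [m [Q ->]]; exists (n + m)%N, (P * 'X^m + Q * 'X^n).
by rewrite addf_div ?expf_neq0 ?tvar_neq0 // rmorphD !rmorphM !rmorphXn exprD.
Qed.

Lemma laurentN f : laurent f -> laurent (- f).
Proof. by move=> [n [P ->]]; exists n, (- P); rewrite rmorphN mulNr. Qed.

Lemma laurentB f g : laurent f -> laurent g -> laurent (f - g).
Proof. by move=> hf hg; apply/laurentD/laurentN. Qed.

Lemma laurentM f g : laurent f -> laurent g -> laurent (f * g).
Proof.
by move=> [n [P ->]] [m [Q ->]]; exists (n + m)%N, (P * Q); rewrite mulf_div rmorphM exprD.
Qed.

Lemma laurentX f n : laurent f -> laurent (f ^+ n).
Proof.
move=> hf; elim: n => [|n IH]; last by rewrite exprS; apply: laurentM.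
by rewrite expr0 -(rmorph1 tofr); apply: laurent_tofr.
Qed.

Lemma laurent_tvarV : laurent tvar^-1.
Proof. by exists 1%N, 1; rewrite rmorph1 expr1 mul1r. Qed.

Lemma laurent_sigma f : laurent f -> laurent (sigma f).
Proof.
move=> [n [P ->]]; rewrite fmorph_div /= sigma_tofr rmorphXn /= sigma_tvar exprVn invrK.
apply: laurentM; last by apply: laurentX; apply: laurent_tofr.
exists (size P).-1, (\poly_(i < size P) P`_((size P).-1 - i)).
by rewrite -sigma0_rev mulfK // expf_neq0 // tvar_neq0.
Qed.

Local Notation u := (tvar - 1).

Definition dvdu (k : nat) (f : LF) : Prop := exists r, laurent r /\ f = u ^+ k * r.

Lemma tofr_XsubC1 : tofr ('X - 1%:P) = u.
Proof. by rewrite rmorphB polyC1 rmorph1. Qed.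

Lemma u_neq0 : u != 0.
Proof. by rewrite -tofr_XsubC1 tofr_eq0 polyXsubC_eq0. Qed.

Lemma laurent_u : laurent u.
Proof. by rewrite -tofr_XsubC1; apply: laurent_tofr. Qed.

Lemma sigma_u : sigma u = - (u * tvar^-1).
Proof. by rewrite rmorphB rmorph1 /= sigma_tvar mulrBl mul1r divff ?tvar_neq0 // opprB. Qed.

Lemma dvdu_laurent k f : dvdu k f -> laurent f.
Proof. by move=> [r [hr ->]]; apply: laurentM => //; apply: laurentX laurent_u. Qed.

Lemma laurent_dvdu0 f : laurent f -> dvdu 0 f.
Proof. by move=> hf; exists f; rewrite expr0 mul1r. Qed.

Lemma dvdu0 k : dvdu k 0.
Proof. by exists 0; rewrite mulr0 -(rmorph0 tofr); split; first exact: laurent_tofr. Qed.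

Lemma dvdu_exp k : dvdu k (u ^+ k).
Proof. by exists 1; rewrite mulr1 -(rmorph1 tofr); split; first exact: laurent_tofr. Qed.

Lemma dvdu_leq m n f : (m <= n)%N -> dvdu n f -> dvdu m f.
Proof.
move=> le_mn [r [hr ->]]; exists (u ^+ (n - m) * r).
by rewrite mulrA -exprD subnKC //; split; first exact: laurentM (laurentX _ laurent_u) hr.
Qed.

Lemma dvduD k f g : dvdu k f -> dvdu k g -> dvdu k (f + g).
Proof. by move=> [r [hr ->]] [s [hs ->]]; exists (r + s); rewrite mulrDr; split; first exact: laurentD. Qed.

Lemma dvduN k f : dvdu k f -> dvdu k (- f).
Proof. by move=> [r [hr ->]]; exists (- r); rewrite mulrN; split; first exact: laurentN. Qed.

Lemma dvduB k f g : dvdu k f -> dvdu k g -> dvdu k (f - g).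
Proof. by move=> hf hg; apply/dvduD/dvduN. Qed.

Lemma dvduMl k f g : laurent g -> dvdu k f -> dvdu k (g * f).
Proof. by move=> hg [r [hr ->]]; exists (g * r); rewrite mulrCA; split; first exact: laurentM. Qed.

Lemma dvduM m n f g : dvdu m f -> dvdu n g -> dvdu (m + n) (f * g).
Proof.
by move=> [r [hr ->]] [s [hs ->]]; exists (r * s); rewrite exprD mulrACA; split; first exact: laurentM.
Qed.

Lemma dvdu_sum k n (F : 'I_n -> LF) : (forall i, dvdu k (F i)) -> dvdu k (\sum_(i < n) F i).
Proof. by move=> hF; elim/big_ind: _ => //; [exact: dvdu0 | exact: dvduD]. Qed.

Lemma dvdu_sigma k f : dvdu k f -> dvdu k (sigma f).
Proof.
move=> [r [hr ->]]; rewrite rmorphM rmorphXn /= sigma_u exprNn exprMn.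
exists ((-1) ^+ k * tvar^-1 ^+ k * sigma r).
split; last by rewrite !mulrA [(-1) ^+ k * _]mulrC.
apply: laurentM; last exact: laurent_sigma.
by apply: laurentM; [exact/laurentX/laurentN/(laurent_nat 1) | exact/laurentX/laurent_tvarV].
Qed.

Lemma dvdu1_tofr P : root P 1 -> dvdu 1 (tofr P).
Proof.
move=> /factor_theorem [Q ->]; exists (tofr Q); split; first exact: laurent_tofr.
by rewrite rmorphM /= tofr_XsubC1 expr1 mulrC.
Qed.

Lemma dvdu1_tvarVX m : dvdu 1 (tvar^-1 ^+ m - 1).
Proof.
rewrite -sigma_tvar -rmorphXn -(rmorph1 sigma) -rmorphB; apply: dvdu_sigma.
by rewrite -(rmorph1 tofr) -rmorphXn -rmorphB; apply: dvdu1_tofr; rewrite rootE !hornerE expr1n subrr.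
Qed.

Lemma laurent_dvdu1 f : laurent f -> exists c, dvdu 1 (f - cst c).
Proof.
move=> [n [P ->]]; exists P.[1].
have -> : tofr P / tvar ^+ n - cst P.[1] = tvar^-1 ^+ n * tofr (P - P.[1]%:P * 'X^n).
  by rewrite exprVn rmorphB rmorphM rmorphXn /= mulrBr mulrCA mulVf ?expf_neq0 ?tvar_neq0 // mulr1 mulrC.
apply: dvduMl; first exact/laurentX/laurent_tvarV.
by apply: dvdu1_tofr; rewrite rootE !hornerE expr1n mulr1 subrr.
Qed.

Lemma dvdu_lead k f : dvdu k f -> exists c, dvdu k.+1 (f - cst c * u ^+ k).
Proof.
move=> [r [hr ->]]; have [c hc] := laurent_dvdu1 hr; exists c.
by rewrite mulrC -mulrBl mulrC -addn1; apply: dvduM (dvdu_exp k) hc.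
Qed.

Lemma dvdu_cst k c : dvdu k.+1 (cst c * u ^+ k) -> c = 0.
Proof.
move=> [r [[n [P ->]]]]; rewrite exprSr -mulrA mulrC => /(mulfI (expf_neq0 k u_neq0)).
move=> /(congr1 (fun f => f * tvar ^+ n)); rewrite mulrA mulfVK ?expf_neq0 ?tvar_neq0 //.
rewrite /cst -tofr_XsubC1 -rmorphXn -!rmorphM /= => /tofr_inj /(congr1 (horner^~ 1)).
by rewrite !hornerE subrr mul0r expr1n mulr1.
Qed.

Lemma dvdu_anti_even m q : ~~ odd m -> sigma q = - q -> dvdu m q -> dvdu m.+1 q.
Proof.
move=> even_m anti_q [r [hr def_q]]; have [c hc] := laurent_dvdu1 hr.
have sigma_r : tvar^-1 ^+ m * sigma r = - r.
  apply: (mulfI (expf_neq0 m u_neq0)); rewrite mulrN -def_q -anti_q def_q.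
  rewrite rmorphM rmorphXn /= sigma_u exprNn -signr_odd (negPf even_m) mul1r.
  by rewrite exprMn mulrA.
suff c0 : c = 0.
  by move: hc; rewrite c0 rmorph0 subr0 -[m.+1]addn1 def_q; apply: dvduM (dvdu_exp m).
suff /eqP : c *+ 2 = 0 by rewrite Num.Theory.mulrn_eq0 => /eqP.
apply: (@dvdu_cst 0).
set s := sigma r; set v := tvar^-1 ^+ m.
(* modulo u, 2 c is the value at 1 of r + v s = 0 *)
have -> : cst (c *+ 2) * u ^+ 0 = - (r - cst c) - (v * (s - cst c) + cst c * (v - 1)).
  rewrite expr0 mulr1 rmorphMn mulrBr sigma_r /=.
  by ring.
apply: dvduB; first exact: dvduN hc.
apply: dvduD; apply: dvduMl.
- exact/laurentX/laurent_tvarV.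
- by rewrite -(sigma_cst c) -rmorphB; apply: dvdu_sigma.
- exact: laurent_cst.
- exact: dvdu1_tvarVX.
Qed.

Definition ycoef (j : nat) : LF := (-1) ^+ j * (u ^+ j - (tvar^-1 - 1) ^+ j).

Lemma tvarV_sub1 : tvar^-1 - 1 = - (u * tvar^-1).
Proof. by rewrite -sigma_u rmorphB rmorph1 /= sigma_tvar. Qed.

Lemma sigma_ycoef j : sigma (ycoef j) = - ycoef j.
Proof.
have sigma_tvarV_sub1 : sigma (tvar^-1 - 1) = u by rewrite rmorphB rmorph1 /= sigma_tvarV.
rewrite rmorphM rmorphB !rmorphXn rmorphN1 /= sigma_tvarV_sub1.
by rewrite rmorphB rmorph1 /= sigma_tvar -mulrN opprB.
Qed.

Lemma laurent_ycoef j : laurent (ycoef j).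
Proof.
rewrite /ycoef tvarV_sub1; apply: laurentM; first exact/laurentX/laurentN/(laurent_nat 1).
apply: laurentB; apply: laurentX; first exact: laurent_u.
by apply/laurentN/laurentM; [exact: laurent_u | exact: laurent_tvarV].
Qed.

Lemma ycoef_lead j : odd j -> dvdu j.+1 (ycoef j - cst (- 2%:R) * u ^+ j).
Proof.
move=> odd_j; rewrite /ycoef tvarV_sub1 (exprNn (u * _)) exprMn -signr_odd odd_j rmorphN rmorph_nat.
have -> : (-1) ^+ true * (u ^+ j - (-1) ^+ true * (u ^+ j * tvar^-1 ^+ j)) - - 2%:R * u ^+ j
        = - (u ^+ j * (tvar^-1 ^+ j - 1)) by ring.
by rewrite -addn1; apply/dvduN/dvduM; [exact: dvdu_exp | exact: dvdu1_tvarVX].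
Qed.

Lemma dvdu_triangular_free n N (e : nat -> nat) (g : nat -> LF) (kappa : C) (b : nat -> C) :
  kappa != 0 -> {homo e : i j / (i < j)%N} ->
  (forall i, dvdu (e i).+1 (g i - cst kappa * u ^+ e i)) ->
  (forall i, (i < n)%N -> (e i < N)%N) ->
  dvdu N (\sum_(i < n) cst (b i) * g i) -> forall i, (i < n)%N -> b i = 0.
Proof.
move=> kappa0; elim: n e g b => [//|n IH] e g b e_mono g_lead e_lt_N.
have g_dvdu j : dvdu (e j) (g j).
  rewrite -(subrK (cst kappa * u ^+ e j) (g j)); apply: dvduD.
    exact: dvdu_leq (leqnSn _) (g_lead j).
  by apply: dvduMl; [exact: laurent_cst | exact: dvdu_exp].
rewrite big_ord_recl /=; set rest := \sum_(i < n) _ => dvdu_sum_bg.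
have dvdu_rest : dvdu (e 0%N).+1 rest.
  apply: dvdu_sum => j; apply: dvduMl; first exact: laurent_cst.
  exact: dvdu_leq (e_mono _ _ (ltn0Sn j)) (g_dvdu _).
have b0 : b 0%N = 0.
  suff /eqP : b 0%N * kappa = 0 by rewrite mulf_eq0 (negPf kappa0) orbF => /eqP.
  apply: (@dvdu_cst (e 0%N)).
  have -> : cst (b 0%N * kappa) * u ^+ e 0%N =
            (cst (b 0%N) * g 0%N + rest) - rest - cst (b 0%N) * (g 0%N - cst kappa * u ^+ e 0%N).
    by rewrite rmorphM; ring.
  apply: dvduB; last by apply: dvduMl; [exact: laurent_cst | exact: g_lead].
  by apply: dvduB dvdu_rest; apply: dvdu_leq (e_lt_N _ _) dvdu_sum_bg.
case=> [//|i] lt_i_n; apply: (IH (e \o succn) (g \o succn) (b \o succn)) => //.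
- by move=> j k lt_jk; apply: e_mono.
- by move=> j; apply: g_lead.
- by move=> j lt_jn; apply: e_lt_N.
- by move: dvdu_sum_bg; rewrite b0 rmorph0 mul0r add0r.
Qed.

Definition uspan (L : nat) (g : nat -> LF) (n : nat) (f : LF) : Prop :=
  exists b : nat -> C, dvdu L (f - \sum_(i < n) cst (b i) * g i).

Lemma uspan_dvdu L g n f : dvdu L f -> uspan L g n f.
Proof. by move=> dvdu_f; exists (fun=> 0); rewrite big1 ?subr0 // => i _; rewrite rmorph0 mul0r. Qed.

Lemma uspan_subr L g n f i0 c :
  (i0 < n)%N -> uspan L g n (f - cst c * g i0) -> uspan L g n f.
Proof.
move=> lt_i0n [b dvdu_fb]; exists (fun i => b i + (if i == i0 then c else 0)).
have -> : \sum_(i < n) cst (b i + (if i == i0 :> nat then c else 0)) * g i =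
          \sum_(i < n) cst (b i) * g i + cst c * g i0.
  under eq_bigr do rewrite rmorphD mulrDl.
  rewrite big_split /=; congr (_ + _).
  rewrite (eq_bigr (fun i : 'I_n => if i == i0 :> nat then cst c * g i else 0)).
    by rewrite -big_mkcond (big_ord1_eq _ (fun k => cst c * g k)) lt_i0n.
  by move=> i _; case: eqP; rewrite ?rmorph0 ?mul0r.
by rewrite opprD addrA addrAC.
Qed.

Lemma uspan_taylor L f : laurent f -> uspan L (fun i => u ^+ i) L f.
Proof.
suff span_from n m g : (m + n = L)%N -> dvdu m g -> uspan L (fun i => u ^+ i) L g.
  by move=> lf; apply: (span_from L 0%N) => //; apply: laurent_dvdu0.
elim: n m g => [|n IH] m g sum_mn dvdu_g; first by apply: uspan_dvdu; rewrite -sum_mn addn0.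
have [c dvdu_gc] := dvdu_lead dvdu_g.
apply: (uspan_subr (i0 := m) (c := c)); first by rewrite -sum_mn addnS ltnS leq_addr.
by apply: (IH m.+1) dvdu_gc; rewrite addSnnS.
Qed.

Lemma uspan_anti L q : laurent q -> sigma q = - q ->
  uspan L (fun i => ycoef i.*2.+1) L./2 q.
Proof.
suff span_from n m g : (m + n = L)%N -> sigma g = - g -> dvdu m g ->
    uspan L (fun i => ycoef i.*2.+1) L./2 g.
  by move=> lq aq; apply: (span_from L 0%N) => //; apply: laurent_dvdu0.
elim: n m g => [|n IH] m g sum_mn anti_g dvdu_g; first by apply: uspan_dvdu; rewrite -sum_mn addn0.
have lt_mL : (m < L)%N by rewrite -sum_mn addnS ltnS leq_addr.
have sum_Smn : (m.+1 + n)%N = L by rewrite addSnnS.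
have [odd_m | even_m] := boolP (odd m); last first.
  exact: IH sum_Smn anti_g (dvdu_anti_even even_m anti_g dvdu_g).
have [c dvdu_gc] := dvdu_lead dvdu_g.
have def_m : (m./2).*2.+1 = m by rewrite -[RHS]odd_double_half odd_m add1n.
apply: (uspan_subr (i0 := m./2) (c := - (c / 2%:R))).
  by have := half_leq lt_mL; rewrite -uphalfE uphalf_half odd_m.
apply: (IH m.+1) => //; rewrite def_m.
  by rewrite rmorphB rmorphM /= sigma_cst sigma_ycoef anti_g mulrN opprK opprB addrC.
have -> : g - cst (- (c / 2%:R)) * ycoef m =
          g - cst c * u ^+ m - cst (- (c / 2%:R)) * (ycoef m - cst (- 2%:R) * u ^+ m).
  have -> : cst c = cst (- (c / 2%:R)) * cst (- 2%:R) by rewrite -rmorphM mulrNN divfK ?two_neq0.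
  by ring.
apply: dvduB dvdu_gc _; apply: dvduMl; [exact: laurent_cst | exact: ycoef_lead].
Qed.

Lemma mkE a b c : mk a b c =
  \matrix_(i < 2, j < 2) if i == 0 then (if j == 0 then c else a) else (if j == 0 then b else - c).
Proof.
apply/matrixP => i j; rewrite !mxE.
by case: i => [[|[|i]] hi]; case: j => [[|[|j]] hj] //=; rewrite ?mulr1 ?mulrN1 !mulr0 ?addr0 ?add0r.
Qed.

Lemma mk_inj a b c a' b' c' :
  mk a b c = mk a' b' c' -> [/\ a = a', b = b' & c = c'].
Proof.
by rewrite !mkE => /matrixP e; split; [move: (e 0 1) | move: (e 1 0) | move: (e 0 0)]; rewrite !mxE.
Qed.

Lemma mkD a b c a' b' c' : mk a b c + mk a' b' c' = mk (a + a') (b + b') (c + c').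
Proof. by rewrite /mk !scalerDl addrACA (addrACA (a *: E_)). Qed.

Lemma mkN a b c : - mk a b c = mk (- a) (- b) (- c).
Proof. by rewrite /mk !scaleNr !opprD. Qed.

Lemma mkZ k a b c : cscale k (mk a b c) = mk (cst k * a) (cst k * b) (cst k * c).
Proof. by rewrite /cscale /mk !scalerDr !scalerA. Qed.

Lemma mk0 : mk 0 0 0 = 0.
Proof. by rewrite /mk !scale0r !addr0. Qed.

Lemma mk_sum n (A B G : 'I_n -> LF) :
  \sum_(i < n) mk (A i) (B i) (G i) = mk (\sum_i A i) (\sum_i B i) (\sum_i G i).
Proof.
elim: n A B G => [|n IH] A B G; first by rewrite !big_ord0 mk0.
by rewrite !big_ord_recr /= IH mkD.
Qed.

Lemma lbr_mk a b c a' b' c' : lbr (mk a b c) (mk a' b' c') =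
  mk (2%:R * (c * a' - c' * a)) (2%:R * (b * c' - b' * c)) (a * b' - a' * b).
Proof.
rewrite /lbr !mkE; apply/matrixP => i j; rewrite !mxE !big_ord_recr !big_ord0 /= !mxE.
by case: i => [[|[|i]] hi]; case: j => [[|[|j]] hj] //=; ring.
Qed.

Lemma inI_mk n p q : sigma q = - q -> dvdu n p -> dvdu n q -> inI n (mk p (sigma p) q).
Proof.
move=> anti_q dvdu_p dvdu_q; have lp := dvdu_laurent dvdu_p; have lq := dvdu_laurent dvdu_q.
by exists p, q.
Qed.

Lemma OA_inI0 x : OA x -> inI 0 x.
Proof. by move=> [p [q [lp lq anti_q ->]]]; apply: inI_mk => //; apply: laurent_dvdu0. Qed.

Lemma inI_leq m n x : (m <= n)%N -> inI n x -> inI m x.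
Proof.
move=> le_mn [p [q [[_ _ anti_q ->] [dvdu_p dvdu_q]]]].
by apply: inI_mk; [| exact: dvdu_leq dvdu_p | exact: dvdu_leq dvdu_q].
Qed.

Lemma inI0 n : inI n 0.
Proof. by rewrite -mk0 -{2}(rmorph0 sigma); apply: inI_mk; rewrite ?oppr0 ?rmorph0 //; apply: dvdu0. Qed.

Lemma inID n x y : inI n x -> inI n y -> inI n (x + y).
Proof.
move=> [p [q [[_ _ anti_q ->] [dvdu_p dvdu_q]]]] [p' [q' [[_ _ anti_q' ->] [dvdu_p' dvdu_q']]]].
rewrite mkD -rmorphD; apply: inI_mk; [| exact: dvduD | exact: dvduD].
by rewrite rmorphD /= anti_q anti_q' opprD.
Qed.

Lemma inIZ n c x : inI n x -> inI n (cscale c x).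
Proof.
move=> [p [q [[_ _ anti_q ->] [dvdu_p dvdu_q]]]].
rewrite mkZ -(sigma_cst c) -rmorphM sigma_cst; apply: inI_mk.
- by rewrite rmorphM /= sigma_cst anti_q mulrN.
- by apply: dvduMl dvdu_p; apply: laurent_cst.
- by apply: dvduMl dvdu_q; apply: laurent_cst.
Qed.

Lemma sigma_cross p p' : sigma (p * sigma p' - p' * sigma p) = - (p * sigma p' - p' * sigma p).
Proof.
rewrite rmorphB (rmorphM sigma p) (rmorphM sigma p') /= !sigmaK.
by rewrite opprB [_ * p']mulrC [p * _]mulrC.
Qed.

Lemma lbr_OA p q p' q' : sigma q = - q -> sigma q' = - q' ->
  lbr (mk p (sigma p) q) (mk p' (sigma p') q') =
  mk (2%:R * (q * p' - q' * p)) (sigma (2%:R * (q * p' - q' * p))) (p * sigma p' - p' * sigma p).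
Proof.
move=> anti_q anti_q'; rewrite lbr_mk; congr mk.
by rewrite rmorphM rmorphB !rmorphM rmorph_nat /= anti_q anti_q'; ring.
Qed.

Lemma inI_lbr m n x y : inI m x -> inI n y -> inI (m + n) (lbr x y).
Proof.
move=> [p [q [[_ _ anti_q ->] [dvdu_p dvdu_q]]]] [p' [q' [[_ _ anti_q' ->] [dvdu_p' dvdu_q']]]].
rewrite lbr_OA //; apply: inI_mk; first exact: sigma_cross.
  apply: dvduMl; first exact: laurent_nat.
  by apply: dvduB; [exact: dvduM | rewrite addnC; exact: dvduM].
by apply: dvduB; [| rewrite addnC]; apply: dvduM => //; apply: dvdu_sigma.
Qed.

Lemma inI0_lbr x y : inI 0 x -> inI 0 y -> inI 1 (lbr x y).
Proof.
have dvdu1_anti f : laurent f -> sigma f = - f -> dvdu 1 f.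
  by move=> lf anti_f; apply: dvdu_anti_even anti_f (laurent_dvdu0 lf).
move=> [p [q [[lp lq anti_q ->] _]]] [p' [q' [[lp' lq' anti_q' ->] _]]].
rewrite lbr_OA //; apply: inI_mk; first exact: sigma_cross.
  apply: dvduMl; first exact: laurent_nat.
  rewrite -[1%N]/(1 + 0)%N; apply: dvduB; apply: dvduM; by [apply: dvdu1_anti | apply: laurent_dvdu0].
apply: dvdu1_anti _ (sigma_cross p p').
by apply: laurentB; apply: laurentM => //; apply: laurent_sigma.
Qed.

Lemma derived_inI n x : derived n x -> inI n x.
Proof.
elim=> {n x} [x /OA_inI0 //| [|n] x y _ Ix _ Iy | n | n x y _ Ix _ Iy | n c x _ Ix].
- exact: inI0_lbr.
- by apply: inI_leq (inI_lbr Ix Iy); rewrite addSn ltnS leq_addl.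
- exact: inI0.
- exact: inID.
- exact: inIZ.
Qed.

Lemma filter_odd_iota n : [seq j <- iota 0 n | odd j] = [seq i.*2.+1 | i <- iota 0 n./2].
Proof.
elim: n => [//|n IH]; rewrite -addn1 iotaD filter_cat IH /= add0n.
have def_n := odd_double_half n; rewrite addn1 -uphalfE uphalf_half addnC.
case: (odd n) def_n => [|_]; last by rewrite cats0 addn0.
by rewrite add1n iotaD map_cat /= add0n => ->.
Qed.

Lemma size_basis_family L : size (basis_family L) = (L + L./2)%N.
Proof. by rewrite size_cat !size_map filter_odd_iota size_map !size_iota. Qed.

Lemma basis_familyE L :
  basis_family L = [seq Xk i | i <- iota 0 L] ++ [seq Yk i.*2.+1 | i <- iota 0 L./2].
Proof. by rewrite /basis_family filter_odd_iota -map_comp. Qed.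

Lemma Xk_mk k : Xk k = mk (2%:R * u ^+ k) (sigma (2%:R * u ^+ k)) 0.
Proof. by rewrite rmorphM rmorph_nat rmorphXn /= rmorphB rmorph1 /= sigma_tvar. Qed.

Lemma lcomb_basis_family a L : lcomb a (basis_family L) =
  mk (\sum_(i < L) cst (a i) * (2%:R * u ^+ i))
     (sigma (\sum_(i < L) cst (a i) * (2%:R * u ^+ i)))
     (\sum_(i < L./2) cst (a (L + i)%N) * ycoef i.*2.+1).
Proof.
rewrite /lcomb size_basis_family big_split_ord /= basis_familyE.
under eq_bigr => i _ do
  rewrite nth_cat size_map size_iota ltn_ord (nth_map 0%N) ?size_iota // nth_iota // add0n.
under eq_bigr => i _ do rewrite Xk_mk mkZ mulr0.
under [X in _ + X]eq_bigr => i _ do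
  rewrite nth_cat size_map size_iota ltnNge leq_addr /= addKn (nth_map 0%N) ?size_iota //.
under [X in _ + X]eq_bigr => i _ do rewrite nth_iota // add0n /Yk mkZ !mulr0.
rewrite !mk_sum mkD !big1_eq !addr0 add0r rmorph_sum; congr mk; apply: eq_bigr => i _.
by rewrite rmorphM /= sigma_cst.
Qed.

Lemma OA_Xk k : OA (Xk k).
Proof.
rewrite Xk_mk; exists (2%:R * u ^+ k), 0; rewrite rmorph0 oppr0; split => //.
  by apply: laurentM; [exact: laurent_nat | exact/laurentX/laurent_u].
exact: (laurent_nat 0).
Qed.

Lemma OA_Yk j : OA (Yk j).
Proof.
exists 0, (ycoef j); rewrite rmorph0; split => //; last exact: sigma_ycoef.
  exact: (laurent_nat 0).
exact: laurent_ycoef.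
Qed.

Lemma basis_family_OA L x : x \in basis_family L -> OA x.
Proof.
rewrite basis_familyE mem_cat => /orP [/mapP [k _ ->] | /mapP [j _ ->]].
  exact: OA_Xk.
exact: OA_Yk.
Qed.

Lemma basis_family_free L a : inI L (lcomb a (basis_family L)) ->
  forall i, (i < size (basis_family L))%N -> a i = 0.
Proof.
rewrite lcomb_basis_family size_basis_family.
move=> [p [q [[_ _ _ /mk_inj [<- _ <-]] [dvdu_p dvdu_q]]]] i lt_i.
have [lt_iL | le_Li] := ltnP i L.
  apply: (@dvdu_triangular_free L L id (fun j => 2%:R * u ^+ j) 2%:R) => //.
  - exact: two_neq0.
  - by move=> j; rewrite rmorph_nat subrr; apply: dvdu0.
rewrite -(subnKC le_Li).
apply: (@dvdu_triangular_free L./2 L (fun j => j.*2.+1) (fun j => ycoef j.*2.+1) (- 2%:R)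
  (fun j => a (L + j)%N)) => //.
- by rewrite oppr_eq0 two_neq0.
- by move=> j k; rewrite ltnS ltn_double.
- by move=> j; apply: ycoef_lead; rewrite /= odd_double.
- by move=> j lt_j; have := odd_double_half L; rewrite -!mul2n; lia.
- by rewrite -(ltn_add2l L) subnKC.
Qed.

Lemma basis_family_span L x : OA x -> exists a, inI L (x - lcomb a (basis_family L)).
Proof.
move=> [p [q [lp lq anti_q ->]]].
have [c dvdu_pc] := uspan_taylor L lp; have [b dvdu_qb] := uspan_anti L lq anti_q.
pose a i := if (i < L)%N then c i / 2%:R else b (i - L)%N.
exists a; rewrite lcomb_basis_family.
have -> : \sum_(i < L) cst (a i) * (2%:R * u ^+ i) = \sum_(i < L) cst (c i) * u ^+ i.
  apply: eq_bigr => i _; rewrite /a ltn_ord mulrA -(rmorph_nat cst) -rmorphM.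
  by rewrite divfK // two_neq0.
have -> : \sum_(i < L./2) cst (a (L + i)%N) * ycoef i.*2.+1 =
          \sum_(i < L./2) cst (b i) * ycoef i.*2.+1.
  by apply: eq_bigr => i _; rewrite /a ltnNge leq_addr /= addKn.
rewrite mkN mkD -(rmorphN sigma) -(rmorphD sigma); apply: inI_mk => //.
rewrite rmorphB /= anti_q rmorph_sum /= opprB addrC; congr (_ - _).
rewrite -sumrN; apply: eq_bigr => i _.
by rewrite rmorphM /= sigma_cst sigma_ycoef mulrN opprK.
Qed.

Local Close Scope ring_scope.

Theorem proposition4 (L : nat) :
  (1 <= L)%N ->
  [/\ quot_solvable L, quot_dim L (L + L./2) & quot_basis L (basis_family L)].
Proof.
move=> _.
have basis : quot_basis L (basis_family L).
  by split; [exact: basis_family_OA | exact: basis_family_free | exact: basis_family_span].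
split => //; first by exists L => x /derived_inI.
by exists (basis_family L); rewrite size_basis_family.
Qed.
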